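(* Let $(n,s,L)$ be a tree with $n\notin L$, and let $\{k_1<k_2<\dots<k_m\}=s^{-1}(n)$; put $k_0=0$. Then $k_m=n-1$. Moreover, putting $n_i=k_i-k_{i-1}$ for $i=1,\dots,m$, the triples $(n_i,s_i,L_i)$ are trees, where $s_i(j)=s(j+k_{i-1})-k_{i-1}$ for $j\in\{1,\dots,n_i-1\}$ and $L_i=\{x-k_{i-1}\mid x\in L\}\cap\{1,\dots,n_i\}$.
   Context: For $n\ge1$ write $\underline n=\{1,\dots,n\}$. A tree $(n,s,L)$ consists of a subset $L\subseteq\underline n$ (the leaves) and a map $s:\underline{n-1}\to\underline n\setminus L$ such that (1) $s(x)>x$ for all $x$, and (2) $x\le y<s(x)$ implies $s(y)\le s(x)$. *)

From mathcomp Require Import all_boot.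
Set Implicit Arguments. Unset Strict Implicit. Unset Printing Implicit Defensive.

(* A tree (n, s, L): n >= 1, L a subset of {1..n} (given as a predicate on nat),
   s : {1..n-1} -> {1..n} \ L, represented by a total function nat -> nat of which
   only the values on {1..n-1} matter. *)
Definition is_tree (n : nat) (s : nat -> nat) (L : pred nat) : Prop :=
  [/\ 1 <= n,
      (forall x, L x -> 1 <= x <= n),
      (forall x, 1 <= x <= n.-1 -> (1 <= s x <= n) && ~~ L (s x)),
      (forall x, 1 <= x <= n.-1 -> x < s x)
    & (forall x y, 1 <= x <= n.-1 -> 1 <= y <= n.-1 -> x <= y < s x -> s y <= s x)].

Definition preim_n (n : nat) (s : nat -> nat) : seq nat :=
  [seq k <- iota 1 n.-1 | s k == n].

Definition sub_s (s : nat -> nat) (k : nat) : nat -> nat := fun j => s (j + k) - k.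
Definition sub_L (L : pred nat) (k ni : nat) : pred nat :=
  fun y => [&& 1 <= y, y <= ni & L (y + k)].

(** The points [k_1 < ... < k_m] with [s k = n] cut [{1, ..., n-1}] into the
    blocks [(k_(i-1), k_i]].  Each block is closed under [s]: if [k_(i-1) < x < k_i]
    had [s x > k_i], the monotonicity axiom applied to [x <= k_i < s x] would give
    [n = s k_i <= s x], so [x] would be one of the [k_j], which is impossible
    strictly between two consecutive ones.  A block closed under [s] is a tree
    once shifted down, and the last block ends at [n - 1] since [s (n-1) = n]. *)
From mathcomp Require Import all_boot.
From mathcomp Require Import zify.

Set Implicit Arguments.
Unset Strict Implicit.
Unset Printing Implicit Defensive.

Lemma notin_between_nth (t : seq nat) (i x : nat) : sorted ltn t -> i.+1 < size t ->
  nth 0 t i < x < nth 0 t i.+1 -> x \notin t.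
Proof.
move=> t_sorted lt_i_t /andP[lt_ti_x lt_x_ti1]; apply/negP => x_in_t.
have t_leq : sorted leq t by apply: sub_sorted t_sorted => a b /ltnW.
have le_nth := sorted_leq_nth leq_trans leqnn 0 t_leq.
have j_t : index x t < size t by rewrite index_mem.
have i_t : i < size t by apply: ltnW.
have nth_j : nth 0 t (index x t) = x by apply: nth_index.
case: (leqP (index x t) i) => [le_ji | lt_ij].
- by have := le_nth _ _ j_t i_t le_ji; rewrite nth_j; lia.
- by have := le_nth _ _ lt_i_t j_t lt_ij; rewrite nth_j; lia.
Qed.

Lemma mem_preim_n (n : nat) (s : nat -> nat) (k : nat) :
  (k \in preim_n n s) = [&& 1 <= k, k <= n.-1 & s k == n].
Proof.
rewrite mem_filter mem_iota andbC.
by case: (s k == n); rewrite ?andbF //=; apply/idP/idP; lia.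
Qed.

Lemma path_preim_n (n : nat) (s : nat -> nat) : path ltn 0 (preim_n n s).
Proof. exact/path_filter/(iota_ltn_sorted 0 n.-1.+1)/ltn_trans. Qed.

Section Tree.

Variables (n : nat) (s : nat -> nat) (L : pred nat).
Hypothesis tree : is_tree n s L.

Lemma tree_s_pred : 1 < n -> s n.-1 = n.
Proof.
case: tree => _ _ s_range s_gt _ n_gt1.
have r : 1 <= n.-1 <= n.-1 by lia.
have := s_gt _ r; have /andP[/andP[_ s_le] _] := s_range _ r; lia.
Qed.

Lemma last_preim_n : last 0 (preim_n n s) = n.-1.
Proof.
rewrite /preim_n; case: (ltnP 1 n) => [n_gt1 | n_le1]; last by have -> : n.-1 = 0 by lia.
have s_pred := tree_s_pred n_gt1.
have -> : n.-1 = n.-2 + 1 by lia.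
rewrite iotaD filter_cat last_cat /= add1n addn1 (_ : n.-2.+1 = n.-1); last by lia.
by rewrite s_pred eqxx.
Qed.

Lemma tree_s_le_preim (x k : nat) :
  1 <= x -> x < k <= n.-1 -> s k = n -> s x != n -> s x <= k.
Proof.
case: tree => _ _ s_range _ s_mono x_ge1 x_lt_k s_k s_x.
have x_r : 1 <= x <= n.-1 by lia.
rewrite leqNgt; apply/negP => lt_k_sx.
have := s_mono x k x_r (ltac:(lia)) (ltac:(lia)).
have /andP[/andP[_ s_x_le] _] := s_range _ x_r; lia.
Qed.

Lemma is_tree_sub (a b : nat) : a < b <= n.-1 ->
  (forall x, a < x < b -> s x <= b) ->
  is_tree (b - a) (sub_s s a) (sub_L L a (b - a)).
Proof.
case: tree => _ _ s_range s_gt s_mono ab_r s_closed.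
have shift_r j : 1 <= j <= (b - a).-1 -> 1 <= j + a <= n.-1 by lia.
have shift_in j : 1 <= j <= (b - a).-1 -> a < j + a < b by lia.
split; rewrite /sub_s /sub_L.
- lia.
- by move=> y /and3P[y_ge1 y_le _]; apply/andP.
- move=> j j_r; have gt_j := s_gt _ (shift_r _ j_r).
  have le_b := s_closed _ (shift_in _ j_r).
  have /andP[_ not_L] := s_range _ (shift_r _ j_r).
  rewrite subnK ?(negbTE not_L) ?andbF ?andbT; lia.
- by move=> j j_r; have := s_gt _ (shift_r _ j_r); lia.
- move=> x y x_r y_r xy_r; have := s_gt _ (shift_r _ x_r).
  by have := s_mono _ _ (shift_r _ x_r) (shift_r _ y_r); lia.
Qed.

End Tree.

Theorem lemma3 (n : nat) (s : nat -> nat) (L : pred nat) :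
  is_tree n s L -> ~~ L n ->
  let ks := preim_n n s in
  last 0 ks = n.-1 /\
  (forall i, i < size ks ->
     let kprev := nth 0 (0 :: ks) i in
     let ni := nth 0 ks i - kprev in
     is_tree ni (sub_s s kprev) (sub_L L kprev ni)).
Proof.
move=> tree _ ks; split; first exact: last_preim_n tree.
move=> i lt_i_ks kprev ni.
have ks0_sorted : sorted ltn (0 :: ks) by apply: path_preim_n.
have i_ks0 : i.+1 < size (0 :: ks) by [].
have k_in : nth 0 ks i \in ks by apply: mem_nth.
have kprev_lt_k : kprev < nth 0 ks i.
  by apply: (sorted_ltn_nth ltn_trans 0 ks0_sorted i i.+1); rewrite ?inE /=; lia.
move: (k_in); rewrite mem_preim_n => /and3P[_ k_le /eqP s_k].
apply: (is_tree_sub tree (b := nth 0 ks i)) => [| x x_r]; first by rewrite kprev_lt_k.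
have x_notin : x \notin ks.
  by have := notin_between_nth ks0_sorted i_ks0 x_r; rewrite inE negb_or => /andP[].
have x_ge1 : 1 <= x by lia.
apply: (tree_s_le_preim tree x_ge1 _ s_k); first by rewrite k_le andbT; case/andP: x_r.
by apply: contra x_notin => /eqP s_x; rewrite mem_preim_n s_x eqxx andbT x_ge1; lia.
Qed.
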